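(* Let $p$ be a CFM process. Then $p$ does not satisfy DNI if and only if there exists a sequential process $p_i \in \mathrm{dec}(p)$ such that $p_i$ does not satisfy DNI.
   Context: Fix a finite set of actions $Act = H \cup L \cup \{\tau\}$, where $H$ (high-level actions) and $L$ (low-level actions) are disjoint and $\tau$ is the silent action; $\mu$ ranges over $Act$, $h$ over $H$. Fix a finite set of process constants $A,B,C,\dots$ disjoint from $Act$. CFM terms are given by three syntactic categories: guarded processes $s ::= \mathbf{0} \mid \mu.q \mid s+s$; sequential processes $q ::= s \mid C$; parallel processes $p ::= q \mid p \,|\, p$. A CFM process is a term all of whose constants have a defining equation $C \doteq s$ with $s$ guarded. The LTS semantics is given by the rules: $\mu.p \xrightarrow{\mu} p$; if $p \xrightarrow{\mu} p'$ and $C \doteq p$ then $C \xrightarrow{\mu} p'$; if $p \xrightarrow{\mu} p'$ then $p+q \xrightarrow{\mu} p'$ and $q+p \xrightarrow{\mu} p'$; if $p \xrightarrow{\mu} p'$ then $p\,|\,q \xrightarrow{\mu} p'\,|\,q$ and $q\,|\,p \xrightarrow{\mu} q\,|\,p'$. A process $p'$ is reachable from $p$ if $p \to^* p'$ in this LTS. A finite-state machine (FSM) is $N=(S,A,T)$ with $S$ a finite set of places, $A$ a finite set of labels containing $\tau$, and $T \subseteq S \times A \times (S \cup \{\theta\})$, where $\theta$ is the empty multiset. Markings are finite multisets over $S$ ($\oplus$ is multiset union, $\ominus$ multiset difference). A transition $t=(s,\ell,m)$ has pre-set $s$, label $\ell$, post-set $m$; it is enabled at marking $m_1$ if $s \in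 m_1$, and firing gives $m_1 \xrightarrow{\ell} (m_1 \ominus s)\oplus m$. Net semantics of CFM: places are the sequential CFM processes other than $\mathbf{0}$. The decomposition function is $\mathrm{dec}(\mathbf{0})=\theta$, $\mathrm{dec}(\mu.p)=\{\mu.p\}$, $\mathrm{dec}(p+p')=\{p+p'\}$, $\mathrm{dec}(C)=\{C\}$, $\mathrm{dec}(p\,|\,p')=\mathrm{dec}(p)\oplus\mathrm{dec}(p')$. The net $[\![p]\!]$ of a CFM process $p$ is an FSM with initial marking $\mathrm{dec}(p)$, all of whose places and transitions are reachable from $\mathrm{dec}(p)$; its transitions are the triples $(s,\mu,\mathrm{dec}(s'))$ for reachable places $s$ with $s \xrightarrow{\mu} s'$ in the LTS (here $s'$ is sequential, so $\mathrm{dec}(s')$ is $\theta$ or a single place). The net $[\![p\setminus H]\!]$ is obtained from $[\![p]\!]=(S,A,T,\mathrm{dec}(p))$ by renaming each place $s$ as $s\setminus H$, deleting all transitions with label in $H$ (keeping the others with places renamed), taking labels $A\setminus H$, and initial marking $\mathrm{dec}(p)\setminus H$ (renaming applied elementwise); for a marking $m$ of $[\![p]\!]$, $m\setminus H$ is the elementwise renamed marking. Branching bisimilarity on places: in an FSM, $s \Rightarrow^{\epsilon} m$ is the least relation with $s \Rightarrow^\epsilon s$, and if $s \Rightarrow^\epsilon s'$ and $s' \xrightarrow{\tau} m$ then $s \Rightarrow^\epsilon m$ ($m$ a place or $\theta$). A relation $R \subseteq S\times S$ is a branching bisimulation if whenever $(s_1,s_2)\in R$, for every $\ell$ and every $s_1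 \xrightarrow{\ell} m_1$: either $\ell=\tau$ and there is $m_2$ with $s_2 \Rightarrow^\epsilon m_2$, $(s_1,m_2)\in R$ and $(m_1,m_2)\in R$; or there are $s, m_2$ with $s_2 \Rightarrow^\epsilon s \xrightarrow{\ell} m_2$, $(s_1,s)\in R$ and either $m_1=\theta=m_2$ or $(m_1,m_2)\in R$; and symmetrically for moves of $s_2$. Branching bisimilarity $\approx$ is the union of all branching bisimulations. The additive closure $R^\oplus$ of a place relation $R$ is the least relation on markings with $(\theta,\theta)\in R^\oplus$ and, if $(s_1,s_2)\in R$ and $(m_1,m_2)\in R^\oplus$, then $(s_1\oplus m_1, s_2\oplus m_2)\in R^\oplus$. Branching team equivalence is $\approx^\oplus$. For CFM processes, $p \approx^\oplus q$ means $\mathrm{dec}(p)\approx^\oplus \mathrm{dec}(q)$ in the union of the nets of $p$ and $q$; in particular $p'\setminus H \approx^\oplus p''\setminus H$ means that the markings $\mathrm{dec}(p')\setminus H$ and $\mathrm{dec}(p'')\setminus H$ are related by $\approx^\oplus$ (computed in the union of the nets $[\![p'\setminus H]\!]$ and $[\![p''\setminus H]\!]$). DNI (Distributed Non-Interference): a CFM process $p$ satisfies DNI if for all $p',p''$ reachable from $p$ and every $h\in H$ with $p' \xrightarrow{h} p''$, we have $p'\setminus H \approx^\oplus p''\setminus H$. Equivalently, for all markings $m_1,m_2$ reachable from $\mathrm{dec}(p)$ in $[\![p]\!]$ and every $h\in H$ with $m_1 \xrightarrow{h} m_2$, the markings $m_1\setminus H$ and $m_2\setminus H$ of $[\![p\setminus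 H]\!]$ are related by $\approx^\oplus$. *)

From Stdlib Require Import List Permutation Relations FinFun.
Import ListNotations.
Set Implicit Arguments.
Unset Strict Implicit.

Section CFM.
Variables (H L K : Type).

Inductive action : Type := Tau | Hi (h : H) | Lo (l : L).

Definition is_high (a : action) : Prop := exists h, a = Hi h.

(* raw terms; the three syntactic categories are carved out by predicates *)
Inductive proc : Type :=
| Nil : proc
| Pref : action -> proc -> proc
| Sum : proc -> proc -> proc
| Const : K -> proc
| Par : proc -> proc -> proc.

(* s ::= 0 | mu.q | s+s   with   q ::= s | C *)
Fixpoint guarded (p : proc) : Prop :=
  match p with
  | Nil => True
  | Pref _ q => match q with Const _ => True | _ => guarded q end
  | Sum a b => guarded a /\ guarded b
  | _ => False
  end.

Definition sequential (p : proc) : Prop := guarded p \/ exists C, p = Const C.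

Fixpoint parallel (p : proc) : Prop :=
  match p with
  | Par a b => parallel a /\ parallel b
  | _ => sequential p
  end.

(* def C is the body of the defining equation C =. def C *)
Variable def : K -> proc.

Definition CFM_process (p : proc) : Prop :=
  parallel p /\ forall C, guarded (def C).

Inductive step : proc -> action -> proc -> Prop :=
| st_pref mu p : step (Pref mu p) mu p
| st_const C mu p' : step (def C) mu p' -> step (Const C) mu p'
| st_suml p q mu p' : step p mu p' -> step (Sum p q) mu p'
| st_sumr p q mu p' : step p mu p' -> step (Sum q p) mu p'
| st_parl p q mu p' : step p mu p' -> step (Par p q) mu (Par p' q)
| st_parr p q mu p' : step p mu p' -> step (Par q p) mu (Par q p').

Definition reachable (p p' : proc) : Prop :=
  clos_refl_trans proc (fun a b => exists mu, step a mu b) p p'.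

(* markings: finite multisets of places, represented by lists up to permutation *)
Definition marking := list proc.

Fixpoint dec (p : proc) : marking :=
  match p with
  | Nil => []
  | Par a b => dec a ++ dec b
  | _ => [p]
  end.

Definition olist (o : option proc) : marking :=
  match o with None => [] | Some s => [s] end.

(* an FSM: a set of places and transitions (s, l, m) with m a place (Some) or theta (None) *)
Record FSM := { places : proc -> Prop; trans : proc -> action -> option proc -> Prop }.

Definition fire (T : proc -> action -> option proc -> Prop) (m1 : marking) (l : action)
  (m2 : marking) : Prop :=
  exists s rest o, Permutation m1 (s :: rest) /\ T s l o /\ Permutation m2 (olist o ++ rest).

Definition glob_trans (s : proc) (mu : action) (o : option proc) : Prop :=
  exists s', step s mu s' /\ olist o = dec s'.

Definition reach_mark (m0 m : marking) : Prop :=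
  clos_refl_trans marking (fun a b => exists l, fire glob_trans a l b) m0 m.

Definition net_place (p : proc) (s : proc) : Prop :=
  exists m, reach_mark (dec p) m /\ In s m.

Definition net (p : proc) : FSM :=
  {| places := net_place p;
     trans := fun s mu o => net_place p s /\ glob_trans s mu o |}.

(* [[p \ H]] : place s\H identified with s (renaming is injective);
   transitions with high labels removed *)
Definition net_hide (p : proc) : FSM :=
  {| places := places (net p);
     trans := fun s mu o => trans (net p) s mu o /\ ~ is_high mu |}.

Definition net_union (N1 N2 : FSM) : FSM :=
  {| places := fun s => places N1 s \/ places N2 s;
     trans := fun s l o => trans N1 s l o \/ trans N2 s l o |}.

Inductive eps (N : FSM) : proc -> option proc -> Prop :=
| eps_refl s : eps N s (Some s)
| eps_step s s' m : eps N s (Some s') -> trans N s' Tau m -> eps N s m.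

Definition Ropt (R : proc -> proc -> Prop) (o1 o2 : option proc) : Prop :=
  match o1, o2 with Some a, Some b => R a b | _, _ => False end.

Definition bb_half (N : FSM) (R : proc -> proc -> Prop) : Prop :=
  forall s1 s2, R s1 s2 -> forall l m1, trans N s1 l m1 ->
    (l = Tau /\ exists m2, eps N s2 m2 /\ Ropt R (Some s1) m2 /\ Ropt R m1 m2)
    \/ (exists s m2, eps N s2 (Some s) /\ trans N s l m2 /\ R s1 s /\
          ((m1 = None /\ m2 = None) \/ Ropt R m1 m2)).

Definition branching_bisim (N : FSM) (R : proc -> proc -> Prop) : Prop :=
  (forall s1 s2, R s1 s2 -> places N s1 /\ places N s2) /\
  bb_half N R /\ bb_half N (fun a b => R b a).

Definition bbisimilar (N : FSM) (s1 s2 : proc) : Prop :=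
  exists R, branching_bisim N R /\ R s1 s2.

Inductive add_clos (R : proc -> proc -> Prop) : marking -> marking -> Prop :=
| ac_nil : add_clos R [] []
| ac_cons s1 s2 m1 m2 : R s1 s2 -> add_clos R m1 m2 -> add_clos R (s1 :: m1) (s2 :: m2)
| ac_perm m1 m2 m1' m2' : add_clos R m1 m2 -> Permutation m1 m1' -> Permutation m2 m2' ->
    add_clos R m1' m2'.

(* p' \ H  ~~(+)  p'' \ H , computed in the union of [[p'\H]] and [[p''\H]] *)
Definition hide_team_equiv (p' p'' : proc) : Prop :=
  add_clos (bbisimilar (net_union (net_hide p') (net_hide p''))) (dec p') (dec p'').

Definition DNI (p : proc) : Prop :=
  forall p' p'' h, reachable p p' -> reachable p p'' -> step p' (Hi h) p'' ->
    hide_team_equiv p' p''.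

End CFM.

(* A state reachable from p arises by letting each sequential component of
   dec p evolve on its own, and a high step of it is a high step of a single
   component while the others form an idle context M.  DNI of p therefore
   reduces to DNI of its components once the team equivalence of the hidden
   nets is shown to be insensitive to such a context: M can be added on both
   sides (every place is bisimilar to itself) and cancelled (the additive
   closure of a transitive relation is cancellative), and bisimilarity of
   places is unchanged when the net of a component is enlarged to the net of
   the whole state, which contains it as a transition-closed subnet. *)

From Stdlib Require Import List FinFun Permutation Relations Classical.
Import ListNotations.

Section Branching.
Variables (H L K : Type) (N : FSM H L K).
Local Notation P := (proc H L K).

Lemma eps_trans a b m : eps N a (Some b) -> eps N b m -> eps N a m.
Proof.
  intros Hab Hbm. induction Hbm; auto.
  eapply eps_step; [apply IHHbm; exact Hab | eassumption].
Qed.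

Lemma bb_half_ext (R R' : P -> P -> Prop) :
  (forall a b, R a b <-> R' a b) -> bb_half N R -> bb_half N R'.
Proof.
  intros E HR s1 s2 H12 l m1 Ht. apply E in H12.
  destruct (HR _ _ H12 _ _ Ht) as [[Hl [m2 [He [H1 H2]]]] | [s [m2 [He [Ht2 [Hs Hm]]]]]].
  - left. split; auto. exists m2.
    destruct m2, m1; simpl in *; try contradiction. rewrite <- !E. auto.
  - right. exists s, m2. rewrite <- E. repeat split; auto.
    destruct Hm as [Hm | Hm]; [left | right]; auto.
    destruct m1, m2; simpl in *; try contradiction. apply E; auto.
Qed.

Lemma eps_sim (R : P -> P -> Prop) a b x :
  bb_half N R -> R a b -> eps N a (Some x) -> exists y, eps N b (Some y) /\ R x y.
Proof.
  intros HR Hab He. remember (Some x) as m eqn:Em. revert x Em.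
  induction He as [a | a s' m He IH Ht]; intros x Em.
  - injection Em as <-. exists b. split; [constructor | auto].
  - subst m. destruct (IH Hab s' eq_refl) as [y [Hey Hy]].
    destruct (HR _ _ Hy _ _ Ht) as [[_ [m2 [He2 [_ H2]]]] | [t [m2 [He2 [Ht2 [_ Hm]]]]]].
    + destruct m2 as [z |]; simpl in H2; [| contradiction].
      exists z. split; auto. eapply eps_trans; eauto.
    + destruct Hm as [[Hc _] | Hm]; [discriminate |].
      destruct m2 as [z |]; simpl in Hm; [| contradiction].
      exists z. split; auto. eapply eps_trans; [exact Hey |]. eapply eps_step; eauto.
Qed.

Definition rcomp (R S : P -> P -> Prop) a c := exists b, R a b /\ S b c.

Lemma bb_half_comp R S : bb_half N R -> bb_half N S -> bb_half N (rcomp R S).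
Proof.
  intros HR HS s1 s3 [s2 [R12 S23]] l m1 Ht.
  destruct (HR _ _ R12 _ _ Ht) as [[Hl [m2 [He [H1 H2]]]] | [s [m2 [He [Ht2 [Hs Hm]]]]]].
  - destruct m2 as [x |]; simpl in H1; [| contradiction].
    destruct m1 as [y |]; simpl in H2; [| contradiction].
    destruct (eps_sim _ _ _ _ HS S23 He) as [z [Hez Hxz]].
    left. split; auto. exists (Some z). split; [| split]; auto; exists x; auto.
  - destruct (eps_sim _ _ _ _ HS S23 He) as [t [Het Hst]].
    destruct (HS _ _ Hst _ _ Ht2)
      as [[Hl [m3 [He3 [H1 H2]]]] | [t' [m3 [He3 [Ht3 [Hs3 Hm3]]]]]].
    + destruct m3 as [z |]; simpl in H1; [| contradiction].
      destruct m2 as [w |]; simpl in H2; [| contradiction].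
      destruct Hm as [[_ Hc] | Hm]; [discriminate |].
      destruct m1 as [y |]; simpl in Hm; [| contradiction].
      left. split; auto. exists (Some z). split; [eapply eps_trans; eauto |].
      split; [exists s | exists w]; auto.
    + right. exists t', m3. split; [eapply eps_trans; eauto |].
      split; auto. split; [exists s; auto |].
      destruct Hm as [[E1 E2] | Hm], Hm3 as [[E3 E4] | Hm3]; subst; auto;
        destruct m1, m2, m3; simpl in *; try contradiction.
      right. exists p0; auto.
Qed.

Lemma bbisimilar_trans a b c : bbisimilar N a b -> bbisimilar N b c -> bbisimilar N a c.
Proof.
  intros [R [[HRp [HR HR']] Hab]] [S [[HSp [HS HS']] Hbc]].
  exists (rcomp R S). split; [| exists b; auto].
  split; [| split].
  - intros x y [z [Hxz Hzy]]. split; [apply (HRp _ _ Hxz) | apply (HSp _ _ Hzy)].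
  - apply bb_half_comp; auto.
  - apply (bb_half_ext (rcomp (transp _ S) (transp _ R))); [| apply bb_half_comp; auto].
    intros x y; split; intros [z [? ?]]; exists z; auto.
Qed.

Definition closed_net := forall s l x, trans N s l (Some x) -> places N x.

Lemma bbisimilar_refl a : closed_net -> places N a -> bbisimilar N a a.
Proof.
  intros Hcl Ha. exists (fun x y => x = y /\ places N x). split; auto.
  assert (Hh : bb_half N (fun x y => x = y /\ places N x)).
  { intros s1 s2 [<- Hs] l m1 Ht. right. exists s1, m1.
    split; [constructor |]. do 2 (split; auto).
    destruct m1 as [x |]; [right; simpl; split; eauto | left; auto]. }
  split; [intros x y [<- Hx]; auto |]. split; auto.
  eapply bb_half_ext; [| exact Hh]. intros x y; split; intros [<- Hx]; auto.
Qed.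

End Branching.

Arguments closed_net {H L K} N.

Section Subnet.
Variables (H L K : Type).
Local Notation P := (proc H L K).

Record subnet (N1 N2 : FSM H L K) : Prop := {
  subnet_places : forall s, places N1 s -> places N2 s;
  subnet_trans : forall s l o, trans N1 s l o -> trans N2 s l o;
  subnet_trans_from : forall s l o, places N1 s -> trans N2 s l o -> trans N1 s l o }.

Arguments subnet_places {N1 N2}.
Arguments subnet_trans {N1 N2}.
Arguments subnet_trans_from {N1 N2}.

Variables (N1 N2 : FSM H L K).
Hypotheses (sub : subnet N1 N2) (closed1 : closed_net N1).

Lemma eps_subnet a m : eps N1 a m -> eps N2 a m.
Proof.
  induction 1; [constructor |]. eapply eps_step; [eassumption |].
  apply (subnet_trans sub); assumption.
Qed.

Lemma eps_subnet_inv a m :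
  eps N2 a m -> places N1 a -> eps N1 a m /\ (forall x, m = Some x -> places N1 x).
Proof.
  intros He Ha. induction He as [a | a s' m He IH Ht].
  - split; [constructor | intros x E; injection E as <-; auto].
  - destruct (IH Ha) as [He1 Hp]. specialize (Hp s' eq_refl).
    assert (Ht1 : trans N1 s' (Tau H L) m) by (apply (subnet_trans_from sub); auto).
    split; [eapply eps_step; eauto |]. intros x ->. eapply closed1; eauto.
Qed.

Lemma bb_half_subnet (R : P -> P -> Prop) :
  (forall a b, R a b -> places N1 a) -> bb_half N1 R -> bb_half N2 R.
Proof.
  intros Hpl HR s1 s2 H12 l m1 Ht.
  destruct (HR _ _ H12 _ _ (subnet_trans_from sub _ _ _ (Hpl _ _ H12) Ht))
    as [[Hl [m2 [He H2]]] | [s [m2 [He Hrest]]]].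
  - left. split; auto. exists m2. split; auto. apply eps_subnet; auto.
  - right. exists s, m2. split; [apply eps_subnet; auto |].
    destruct Hrest as [Ht2 Hrest]. split; auto. apply (subnet_trans sub); auto.
Qed.

Lemma bb_half_subnet_inv (R : P -> P -> Prop) :
  bb_half N2 R -> bb_half N1 (fun x y => R x y /\ places N1 x /\ places N1 y).
Proof.
  intros HR s1 s2 [H12 [P1 P2]] l m1 Ht.
  destruct (HR _ _ H12 _ _ (subnet_trans sub _ _ _ Ht))
    as [[Hl [m2 [He [H1 H2]]]] | [s [m2 [He [Ht2 [Hs Hm]]]]]].
  - destruct (eps_subnet_inv _ _ He P2) as [He1 Hp].
    left. split; auto. exists m2. split; auto.
    destruct m2 as [z |]; simpl in *; [| contradiction].
    destruct m1 as [y |]; simpl in *; [| contradiction].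
    specialize (Hp z eq_refl). repeat split; eauto.
  - destruct (eps_subnet_inv _ _ He P2) as [He1 Hp]. specialize (Hp s eq_refl).
    assert (Ht1 : trans N1 s l m2) by (apply (subnet_trans_from sub); auto).
    right. exists s, m2. repeat split; auto.
    destruct Hm as [Hm | Hm]; [left; auto | right].
    destruct m1 as [y |], m2 as [z |]; simpl in *; try contradiction.
    repeat split; eauto.
Qed.

Lemma bbisimilar_subnet a b :
  places N1 a -> places N1 b -> (bbisimilar N1 a b <-> bbisimilar N2 a b).
Proof.
  intros Ha Hb. split.
  - intros [R [[Hp [HR HR']] Hab]]. exists R. split; auto. split; [| split].
    + intros x y Hxy. destruct (Hp _ _ Hxy). split; apply (subnet_places sub); auto.
    + apply bb_half_subnet; auto. intros x y Hxy; apply (Hp _ _ Hxy).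
    + apply bb_half_subnet; auto. intros x y Hxy; apply (Hp _ _ Hxy).
  - intros [R [[Hp [HR HR']] Hab]].
    exists (fun x y => R x y /\ places N1 x /\ places N1 y). split; auto.
    split; [intros x y [_ [? ?]]; auto | split; [apply bb_half_subnet_inv; auto |]].
    eapply bb_half_ext; [| apply (bb_half_subnet_inv (transp _ R)); auto].
    intros x y; unfold transp; tauto.
Qed.

End Subnet.

Arguments subnet {H L K}.

Section AdditiveClosure.
Variables (H L K : Type).
Local Notation P := (proc H L K).
Implicit Types (R : P -> P -> Prop) (m : marking H L K).

Lemma add_clos_Forall2 R m1 m2 :
  add_clos R m1 m2 <-> exists m2', Forall2 R m1 m2' /\ Permutation m2' m2.
Proof.
  split.
  - induction 1 as [| s1 s2 m1 m2 Hs _ [m [F Pm]] | m1 m2 m1' m2' _ [m [F Pm]] P1 P2].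
    + exists []; auto.
    + exists (s2 :: m); auto.
    + destruct (Permutation_Forall2 P1 F) as [m' [Pm' F']]. exists m'. split; auto.
      exact (perm_trans (Permutation_sym Pm') (perm_trans Pm P2)).
  - intros [m2' [F Pm]]. apply ac_perm with m1 m2'; auto.
    clear Pm. induction F; constructor; auto.
Qed.

Lemma add_clos_app R m1 m2 m3 m4 :
  add_clos R m1 m2 -> add_clos R m3 m4 -> add_clos R (m1 ++ m3) (m2 ++ m4).
Proof.
  rewrite !add_clos_Forall2. intros [m2' [F1 P1]] [m4' [F2 P2]].
  exists (m2' ++ m4'). split; [apply Forall2_app | apply Permutation_app]; auto.
Qed.

Lemma add_clos_refl R m : (forall x, In x m -> R x x) -> add_clos R m m.
Proof. induction m; intros Hr; constructor; simpl in *; auto. Qed.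

Lemma add_clos_impl_in R S m1 m2 :
  (forall x y, In x m1 -> In y m2 -> R x y -> S x y) -> add_clos R m1 m2 -> add_clos S m1 m2.
Proof.
  rewrite !add_clos_Forall2. intros HRS [m2' [F Pm]]. exists m2'. split; auto.
  assert (Hin : forall y, In y m2' -> In y m2) by (intros; eapply Permutation_in; eauto).
  clear Pm. induction F; constructor; simpl in *; auto.
Qed.

Section Cancel.
Variable E : P -> P -> Prop.
Hypothesis E_trans : forall a b c, E a b -> E b c -> E a c.

(* If the copy of x on the right is matched to some z of l1 while x on the
   left is matched to y, then z E x E y lets z take y instead. *)
Lemma add_clos_cons_cancel x l1 l2 : add_clos E (x :: l1) (x :: l2) -> add_clos E l1 l2.
Proof.
  rewrite !add_clos_Forall2. intros [l2' [F Pm]].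
  assert (Hx : In x l2') by (eapply Permutation_in; [apply Permutation_sym, Pm | left; auto]).
  destruct (in_split _ _ Hx) as [[| y l] [r ->]]; inversion F as [| ? ? ? ? Hxy F']; subst.
  - exists r. split; auto. apply (Permutation_cons_inv Pm).
  - destruct (Forall2_app_inv_r _ _ F') as [k1 [k2 [Fk1 [Fk2 ->]]]].
    inversion Fk2 as [| z ? k ? Hzx Fk]; subst.
    exists (l ++ y :: r). split.
    + apply Forall2_app; auto. constructor; eauto.
    + rewrite <- Permutation_middle. exact (Permutation_app_inv (y :: l) r [] l2 x Pm).
Qed.

Lemma add_clos_app_cancel m a b : add_clos E (m ++ a) (m ++ b) -> add_clos E a b.
Proof. induction m as [| x m IH]; auto. intros Hac. apply IH, (add_clos_cons_cancel x), Hac. Qed.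

End Cancel.

End AdditiveClosure.

Section HiddenNets.
Variables (H L K : Type) (def : K -> proc H L K).
Local Notation P := (proc H L K).
Local Notation hidden_union a b := (net_union (net_hide def a) (net_hide def b)).

Lemma trans_hidden_union a b s l o :
  trans (hidden_union a b) s l o <->
  (net_place def a s \/ net_place def b s) /\ glob_trans def s l o /\ ~ is_high l.
Proof. simpl. tauto. Qed.

Lemma fire_perm T (m1 m1' : marking H L K) l m2 :
  Permutation m1 m1' -> fire T m1 l m2 -> fire T m1' l m2.
Proof.
  intros Pm [s [rest [o [P1 [Ht P2]]]]]. exists s, rest, o.
  split; auto. eapply perm_trans; [apply Permutation_sym, Pm | exact P1].
Qed.

Lemma fire_app T (m1 : marking H L K) l m2 M : fire T m1 l m2 -> fire T (m1 ++ M) l (m2 ++ M).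
Proof.
  intros [s [rest [o [P1 [Ht P2]]]]]. exists s, (rest ++ M), o.
  split; [apply (Permutation_app_tail M P1) | split; auto].
  rewrite app_assoc. apply Permutation_app_tail; auto.
Qed.

Lemma reach_mark_app m0 m M : reach_mark def m0 m -> reach_mark def (m0 ++ M) (m ++ M).
Proof.
  induction 1 as [m0 m [l Hf] | | ]; [| apply rt_refl | eapply rt_trans; eauto].
  apply rt_step. exists l. apply fire_app; auto.
Qed.

Lemma reach_mark_perm m0 m0' m : Permutation m0 m0' -> reach_mark def m0 m ->
  exists m', reach_mark def m0' m' /\ Permutation m m'.
Proof.
  intros Pm Hr. apply clos_rt_rt1n_iff in Hr. destruct Hr as [| m1 m2 [l Hf] Hr].
  - exists m0'. split; auto. apply rt_refl.
  - exists m2. split; auto. eapply rt_trans; [apply rt_step | apply clos_rt_rt1n_iff, Hr].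
    exists l. eapply fire_perm; eauto.
Qed.

Lemma net_place_init a s : In s (dec a) -> net_place def a s.
Proof. intros Hin. exists (dec a). split; auto. apply rt_refl. Qed.

Lemma net_place_frame a q M s :
  Permutation (dec q) (dec a ++ M) -> net_place def a s -> net_place def q s.
Proof.
  intros Pq [m [Hr Hin]]. apply (reach_mark_app _ _ M) in Hr.
  destruct (reach_mark_perm _ _ _ (Permutation_sym Pq) Hr) as [m' [Hr' Pm]].
  exists m'. split; auto. eapply Permutation_in; [exact Pm | apply in_or_app; auto].
Qed.

Lemma net_place_step a s l x :
  net_place def a s -> glob_trans def s l (Some x) -> net_place def a x.
Proof.
  intros [m [Hr Hin]] Hg. destruct (in_split _ _ Hin) as [m1 [m2 ->]].
  exists (x :: m1 ++ m2). split; [| left; auto].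
  eapply rt_trans; [exact Hr |]. apply rt_step. exists l, s, (m1 ++ m2), (Some x).
  split; [apply Permutation_sym, Permutation_middle | auto].
Qed.

Lemma hidden_union_closed a b : closed_net (hidden_union a b).
Proof.
  intros s l x Ht. apply trans_hidden_union in Ht.
  destruct Ht as [[Hp | Hp] [Hg _]]; [left | right]; eapply net_place_step; eauto.
Qed.

Section Frame.
Variables (p' p'' q' q'' : P) (M : marking H L K).
Hypotheses (Hp' : Permutation (dec p') (dec q' ++ M))
           (Hp'' : Permutation (dec p'') (dec q'' ++ M)).

Lemma hidden_union_subnet : subnet (hidden_union q' q'') (hidden_union p' p'').
Proof.
  assert (Hpl : forall s, places (hidden_union q' q'') s -> places (hidden_union p' p'') s).
  { intros s [Hs | Hs]; [left | right]; eapply net_place_frame; eauto. }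
  split; auto; intros s l o; rewrite !trans_hidden_union.
  - intros [Hs Ht]. split; auto. apply (Hpl s Hs).
  - intros Hs [_ Ht]. split; auto.
Qed.

Lemma hide_team_equiv_frame : hide_team_equiv def p' p'' <-> hide_team_equiv def q' q''.
Proof.
  unfold hide_team_equiv.
  assert (Hbis : forall x y, In x (dec q') -> In y (dec q'') ->
            bbisimilar (hidden_union q' q'') x y <-> bbisimilar (hidden_union p' p'') x y).
  { intros x y Hx Hy. apply bbisimilar_subnet;
      [apply hidden_union_subnet | apply hidden_union_closed
      | left; apply net_place_init; auto | right; apply net_place_init; auto]. }
  split; intros Heq.
  - assert (Hsh : add_clos (bbisimilar (hidden_union p' p'')) (M ++ dec q') (M ++ dec q'')).
    { apply ac_perm with (dec p') (dec p''); auto;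
        (eapply perm_trans; [eassumption | apply Permutation_app_comm]). }
    apply add_clos_app_cancel in Hsh; [| apply bbisimilar_trans].
    revert Hsh. apply add_clos_impl_in. intros x y Hx Hy. apply Hbis; auto.
  - apply ac_perm with (dec q' ++ M) (dec q'' ++ M); try apply Permutation_sym; auto.
    apply add_clos_app.
    + revert Heq. apply add_clos_impl_in. intros x y Hx Hy. apply Hbis; auto.
    + apply add_clos_refl. intros x Hx. apply bbisimilar_refl; [apply hidden_union_closed |].
      left. apply net_place_init. eapply Permutation_in; [apply Permutation_sym, Hp' |].
      apply in_or_app; auto.
Qed.

End Frame.

End HiddenNets.

Arguments hide_team_equiv_frame {H L K def p' p'' q' q'' M}.

Section Components.
Variables (H L K : Type) (def : K -> proc H L K).
Local Notation P := (proc H L K).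

Inductive evolves : P -> P -> Prop :=
| evolves_nil : evolves (Nil H L K) (Nil H L K)
| evolves_par a b a' b' : evolves a a' -> evolves b b' -> evolves (Par a b) (Par a' b')
| evolves_seq s q : dec s = [s] -> reachable def s q -> evolves s q.

Lemma evolves_refl p : evolves p p.
Proof.
  induction p; try (apply evolves_seq; [reflexivity | apply rt_refl]).
  - apply evolves_nil.
  - apply evolves_par; auto.
Qed.

Lemma evolves_step p q mu q' : evolves p q -> step def q mu q' -> evolves p q'.
Proof.
  intros He. revert mu q'.
  induction He as [| a b a' b' Ha IHa Hb IHb | s q Hs Hr]; intros mu q' Hst.
  - inversion Hst.
  - inversion Hst; subst; apply evolves_par; eauto.
  - apply evolves_seq; auto. eapply rt_trans; [exact Hr | apply rt_step; exists mu; auto].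
Qed.

Lemma reachable_evolves p q : reachable def p q -> evolves p q.
Proof.
  intros Hr. apply clos_rt_rtn1_iff in Hr.
  induction Hr as [| q q' [mu Hst] _ IH]; [apply evolves_refl | eapply evolves_step; eauto].
Qed.

Lemma evolves_step_component p q mu q' : evolves p q -> step def q mu q' ->
  exists pi pi' pi'' M, In pi (dec p) /\ reachable def pi pi' /\ step def pi' mu pi'' /\
    Permutation (dec q) (dec pi' ++ M) /\ Permutation (dec q') (dec pi'' ++ M).
Proof.
  intros He. revert mu q'.
  induction He as [| a b a' b' _ IHa _ IHb | s q Hs Hr]; intros mu q' Hst.
  - inversion Hst.
  - inversion Hst as [| | | | ? ? ? a'' Hst' | ? ? ? b'' Hst']; subst; simpl.
    + destruct (IHa _ _ Hst') as [pi [pi' [pi'' [M [Hin [Hr [Hs' [Q1 Q2]]]]]]]].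
      exists pi, pi', pi'', (M ++ dec b'). rewrite !app_assoc.
      repeat split; auto using in_or_app, Permutation_app_tail.
    + destruct (IHb _ _ Hst') as [pi [pi' [pi'' [M [Hin [Hr [Hs' [Q1 Q2]]]]]]]].
      exists pi, pi', pi'', (dec a' ++ M). repeat split; auto using in_or_app.
      * rewrite Q1, !app_assoc. apply Permutation_app_tail, Permutation_app_comm.
      * rewrite Q2, !app_assoc. apply Permutation_app_tail, Permutation_app_comm.
  - exists s, q, q', []. rewrite Hs, !app_nil_r. repeat split; auto. left; auto.
Qed.

Lemma component_context p pi : In pi (dec p) -> exists (f : P -> P) M, f pi = p /\
  (forall q mu q', step def q mu q' -> step def (f q) mu (f q')) /\
  (forall q, Permutation (dec (f q)) (dec q ++ M)).
Proof.
  induction p as [| | | | a IHa b IHb]; simpl; intros Hin;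
    try (destruct Hin as [<- | []]; exists (fun q => q), [];
         repeat split; auto; intros; rewrite app_nil_r; auto).
  - destruct Hin.
  - apply in_app_or in Hin as [Hin | Hin].
    + destruct (IHa Hin) as [f [M [<- [Hf Hd]]]].
      exists (fun q => Par (f q) b), (M ++ dec b). repeat split.
      * intros; apply st_parl; auto.
      * intros q. simpl. rewrite app_assoc. apply Permutation_app_tail; auto.
    + destruct (IHb Hin) as [f [M [<- [Hf Hd]]]].
      exists (fun q => Par a (f q)), (dec a ++ M). repeat split.
      * intros; apply st_parr; auto.
      * intros q. simpl. rewrite Hd, !app_assoc.
        apply Permutation_app_tail, Permutation_app_comm.
Qed.

Lemma reachable_map (f : P -> P) a b :
  (forall q mu q', step def q mu q' -> step def (f q) mu (f q')) ->
  reachable def a b -> reachable def (f a) (f b).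
Proof.
  intros Hf. induction 1 as [a b [mu Hst] | | ]; [| apply rt_refl | eapply rt_trans; eauto].
  apply rt_step. exists mu; auto.
Qed.

Lemma DNI_of_components p : (forall pi, In pi (dec p) -> DNI def pi) -> DNI def p.
Proof.
  intros Hall p' p'' h R1 _ Hst.
  destruct (evolves_step_component _ _ _ _ (reachable_evolves _ _ R1) Hst)
    as [pi [pi' [pi'' [M [Hin [Rpi' [Hst' [Q1 Q2]]]]]]]].
  assert (Rpi'' : reachable def pi pi'').
  { eapply rt_trans; [exact Rpi' | apply rt_step; eexists; exact Hst']. }
  apply (hide_team_equiv_frame Q1 Q2).
  exact (Hall pi Hin pi' pi'' h Rpi' Rpi'' Hst').
Qed.

Lemma DNI_component p pi : DNI def p -> In pi (dec p) -> DNI def pi.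
Proof.
  intros HD Hin pi' pi'' h R1 R2 Hst.
  destruct (component_context _ _ Hin) as [f [M [<- [Hf Hd]]]].
  apply (hide_team_equiv_frame (Hd pi') (Hd pi'')).
  apply (HD _ _ h); auto using reachable_map.
Qed.

End Components.

Theorem theorem4p1 (H L K : Type) (finH : Finite H) (finL : Finite L) (finK : Finite K)
  (def : K -> proc H L K) (p : proc H L K) :
  CFM_process def p ->
  (~ DNI def p <-> exists pi, In pi (dec p) /\ ~ DNI def pi).
Proof.
  intros _. split.
  - intros HnD. apply NNPP. intros Hno. apply HnD, DNI_of_components.
    intros pi Hin. apply NNPP. intros Hn. apply Hno. exists pi; auto.
  - intros [pi [Hin Hn]] HD. apply Hn. eapply DNI_component; eauto.
Qed.
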